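(* Let $G$ be a group, $A\le\operatorname{Aut}(G)$ with $|A|=n$, and $g\in G$. In the $n$-valued coset group $X=(G,A)$ let $z=\pi(g)$. Let $M\subseteq G$ be the submonoid generated by $\{a(g):a\in A\}$, and let $B^+(e,r)$ and $S^+(e,r)$ denote the set of elements of $M$ of word length at most $r$, respectively exactly $r$, with respect to the generators $\{a(g):a\in A\}$. Then for every $y\in X$ and every $r\ge 0$ the growth function $\xi_y(r)$ of the dynamic $T_z$ at $y$ satisfies $$\frac1n|S^+(e,r)|\le \xi_y(r)\le |B^+(e,r)|.$$
   Context: Coset group: for a group $G$ and finite $A\le\operatorname{Aut}(G)$ with $|A|=n$, $X=G/A$ is the set of $A$-orbits, $\pi:G\to X$ the projection, with $n$-valued multiplication $\pi(g)*\pi(h)=[\pi(g\,a(h)):a\in A]$ (an $n$-multi-set), extended to multi-sets elementwise with multiplicities; unit $\pi(e_G)$, inverse $\pi(g)\mapsto\pi(g^{-1})$. For $z\in X$, the dynamic $T_z:X\to\operatorname{Sym}^nX$ is $T_z(y)=y*z$, with iterates $T_z^0(y)=y$, $T_z^k(y)=T_z^{k-1}(y)*z$, so $T_z^r(y)=y*z*\dots*z$ ($r$ factors $z$). For a multi-set $N$, $\operatorname{Set}(N)$ is the set of distinct elements of $N$. The growth function is $\xi_y(r)=|\operatorname{Set}(T_z^r(y))|$. The word length in $M$ of $m$ is the minimal number of generators $a(g)$ whose product is $m$ (the identity has length $0$). *)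

From Stdlib Require Import List Arith Lia ClassicalEpsilon.
Import ListNotations.
Set Implicit Arguments.

Record Group := {
  carrier :> Type;
  gmul : carrier -> carrier -> carrier;
  gone : carrier;
  ginv : carrier -> carrier;
  gmulA : forall x y z, gmul x (gmul y z) = gmul (gmul x y) z;
  gmul1 : forall x, gmul gone x = x;
  gmulV : forall x, gmul (ginv x) x = gone }.

Section Coset.
Variable G : Group.

Definition decb (P : Prop) : bool :=
  if excluded_middle_informative P then true else false.

Definition is_aut (f : G -> G) : Prop :=
  (forall x y, f (gmul G x y) = gmul G (f x) (f y)) /\
  exists f' : G -> G, forall x, f' (f x) = x /\ f (f' x) = x.

(* The list A enumerates (without repetition) a finite subgroup of Aut(G);
   |A| = length A. *)
Definition aut_subgroup (A : list (G -> G)) : Prop :=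
  (forall a, In a A -> is_aut a) /\
  (exists a, In a A /\ forall x, a x = x) /\
  (forall a b, In a A -> In b A -> exists c, In c A /\ forall x, c x = a (b x)) /\
  (forall a, In a A -> exists b, In b A /\ forall x, b (a x) = x) /\
  (forall i j, i < length A -> j < length A ->
     (forall x, nth i A (fun x => x) x = nth j A (fun x => x) x) -> i = j).

(* number of R-classes (R an equivalence) among the entries of a list,
   i.e. |Set(N)| for the multiset N of classes *)
Fixpoint nclasses (R : G -> G -> Prop) (l : list G) : nat :=
  match l with
  | [] => 0
  | x :: l' => (if decb (exists y, In y l' /\ R x y) then 0 else 1) + nclasses R l'
  end.

Definition card_in (P : G -> Prop) (l : list G) : nat :=
  nclasses (@eq G) (filter (fun m => decb (P m)) l).

Variable A : list (G -> G).

(* pi(x) = pi(y) : same A-orbit *)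
Definition same_orbit (x y : G) : Prop := exists a, In a A /\ y = a x.

(* Representatives of the n-multiset pi(h) * pi(k) = [pi(h a(k)) : a in A] *)
Definition cmul (h k : G) : list G := map (fun a => gmul G h (a k)) A.

Definition cmul_ms (l : list G) (k : G) : list G := flat_map (fun h => cmul h k) l.

(* representatives of T_z^r(y) for y = pi(h), z = pi(k) *)
Fixpoint T_iter (r : nat) (h k : G) : list G :=
  match r with
  | 0 => [h]
  | S r' => cmul_ms (T_iter r' h k) k
  end.

(* growth function xi_y(r) = |Set(T_z^r(y))|, y = pi(h), z = pi(k) *)
Definition xi (h k : G) (r : nat) : nat := nclasses same_orbit (T_iter r h k).

Definition gens (g : G) : list G := map (fun a => a g) A.

Fixpoint words (g : G) (k : nat) : list G :=
  match k with
  | 0 => [gone G]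
  | S k' => flat_map (fun w => map (fun s => gmul G w s) (gens g)) (words g k')
  end.

Definition wordlen_is (g : G) (m : G) (k : nat) : Prop :=
  In m (words g k) /\ forall j, j < k -> ~ In m (words g j).

Definition card_ball (g : G) (r : nat) : nat :=
  card_in (fun m => exists k, k <= r /\ wordlen_is g m k)
          (flat_map (words g) (seq 0 (S r))).

Definition card_sphere (g : G) (r : nat) : nat :=
  card_in (fun m => wordlen_is g m r) (words g r).

End Coset.

Arguments aut_subgroup {G} A.
Arguments xi {G} A h k r.
Arguments card_ball {G} A g r.
Arguments card_sphere {G} A g r.
Arguments same_orbit {G} A x y.
Arguments T_iter {G} A r h k.
Arguments words {G} A g k.

(* Representatives of T_z^r(pi h) are the products h w, w ranging over the
   words of length r in the generators a(g).  Representatives of distinct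
   orbits are distinct, so translating them by h^-1 gives xi distinct elements
   of the ball B^+(e,r).  Conversely, for w in S^+(e,r) the element h w lies in
   the orbit a(y) of one of the xi chosen representatives y, and each orbit has
   at most n = |A| elements, whence |S^+(e,r)| <= n xi. *)
From Stdlib Require Import List Arith Lia Classical ClassicalEpsilon.
Import ListNotations.

Lemma decb_true (P : Prop) : decb P = true <-> P.
Proof.
  unfold decb; destruct (excluded_middle_informative P); split; congruence || tauto.
Qed.

Section Groups.
Variable G : Group.

Lemma gmulKl (u x : G) : gmul G (ginv G u) (gmul G u x) = x.
Proof. now rewrite gmulA, gmulV, gmul1. Qed.

Lemma gmul_linj (u x y : G) : gmul G u x = gmul G u y -> x = y.
Proof. intro Hxy; rewrite <- (gmulKl u x), <- (gmulKl u y), Hxy; reflexivity. Qed.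

Lemma gmulVr (x : G) : gmul G x (ginv G x) = gone G.
Proof.
  set (y := gmul G x (ginv G x)).
  assert (Hyy : gmul G y y = y).
  { unfold y; rewrite <- gmulA, (gmulA G (ginv G x)), gmulV, gmul1; reflexivity. }
  rewrite <- (gmulKl y y), Hyy; apply gmulV.
Qed.

Lemma gmul1r (x : G) : gmul G x (gone G) = x.
Proof. now rewrite <- (gmulV G x), gmulA, gmulVr, gmul1. Qed.

End Groups.

Section Classes.
Variables (G : Group) (R : G -> G -> Prop).

Fixpoint class_reps (l : list G) : list G :=
  match l with
  | [] => []
  | x :: l' =>
      if decb (exists y, In y l' /\ R x y) then class_reps l' else x :: class_reps l'
  end.

Lemma nclasses_class_reps l : nclasses G R l = length (class_reps l).
Proof. induction l as [|x l IH]; simpl; [|destruct (decb _)]; simpl; auto. Qed.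

Lemma class_reps_incl l : incl (class_reps l) l.
Proof.
  induction l as [|x l IH]; simpl; [apply incl_refl|].
  destruct (decb _); [apply incl_tl, IH|].
  apply incl_cons; [left; reflexivity | apply incl_tl, IH].
Qed.

Hypothesis R_refl : forall x, R x x.

Lemma class_reps_NoDup l : NoDup (class_reps l).
Proof.
  induction l as [|x l IH]; simpl; [constructor|].
  destruct (decb _) eqn:Hdec; auto.
  constructor; auto.
  intro Hx.
  assert (Hrep : exists y, In y l /\ R x y)
    by (exists x; split; [apply class_reps_incl, Hx | apply R_refl]).
  apply decb_true in Hrep; congruence.
Qed.

Hypothesis R_sym : forall x y, R x y -> R y x.
Hypothesis R_trans : forall x y z, R x y -> R y z -> R x z.

Lemma class_reps_cover l x : In x l -> exists y, In y (class_reps l) /\ R y x.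
Proof.
  revert x; induction l as [|x l IH]; simpl; [tauto|].
  intros z Hz; destruct (decb _) eqn:Hdec.
  - destruct Hz as [<-|Hz]; auto.
    destruct (proj1 (decb_true _) Hdec) as [y [Hy Hxy]].
    destruct (IH y Hy) as [w [Hw Hwy]].
    exists w; split; eauto.
  - destruct Hz as [<-|Hz]; [exists x; simpl; auto|].
    destruct (IH z Hz) as [w [Hw Hwz]]; exists w; simpl; auto.
Qed.

End Classes.

Arguments class_reps {G} R l.
Arguments class_reps_incl {G R l}.
Arguments class_reps_NoDup {G R} R_refl l.
Arguments class_reps_cover {G R} R_refl R_sym R_trans l [x].

Lemma NoDup_incl_le_nclasses_eq (G : Group) (l L : list G) :
  NoDup l -> incl l L -> length l <= nclasses G (@eq G) L.
Proof.
  intros Hnd Hincl; rewrite nclasses_class_reps.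
  apply NoDup_incl_length; auto.
  intros x Hx.
  destruct (class_reps_cover (@eq_refl G) (@eq_sym G) (@eq_trans G) L (Hincl x Hx))
    as [y [Hy ->]]; exact Hy.
Qed.

Lemma NoDup_length_le_cover (T U : Type) (f : U -> list T) (n : nat)
  (reps : list U) (s : list T) :
  NoDup s -> (forall y, length (f y) = n) ->
  (forall x, In x s -> exists y, In y reps /\ In x (f y)) ->
  length s <= n * length reps.
Proof.
  intros Hnd Hlen Hcover.
  rewrite Nat.mul_comm, <- (flat_map_constant_length f reps) by auto.
  apply NoDup_incl_length; auto.
  intros x Hx; apply in_flat_map, Hcover, Hx.
Qed.

Section CosetDynamics.
Variables (G : Group) (A : list (G -> G)).

Lemma In_T_iter (h g x : G) r :
  In x (T_iter A r h g) <-> exists w, In w (words A g r) /\ x = gmul G h w.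
Proof.
  revert x; induction r as [|r IH]; intro x; simpl.
  - split; [intros [<-|[]] | intros [w [[<-|[]] ->]]].
    + exists (gone G); rewrite gmul1r; auto.
    + rewrite gmul1r; auto.
  - unfold cmul_ms, cmul, gens; rewrite in_flat_map; split.
    + intros [y [Hy Hx]]; apply IH in Hy as [w [Hw ->]].
      apply in_map_iff in Hx as [a [<- Ha]].
      exists (gmul G w (a g)); rewrite gmulA; split; auto.
      apply in_flat_map; exists w; split; auto.
      apply in_map_iff; exists (a g); split; auto.
      apply in_map_iff; eauto.
    + intros [w [Hw ->]]; apply in_flat_map in Hw as [v [Hv Hw]].
      apply in_map_iff in Hw as [s [<- Hs]]; apply in_map_iff in Hs as [a [<- Ha]].
      exists (gmul G h v); split; [apply IH; eauto|].
      apply in_map_iff; exists a; rewrite gmulA; auto.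
Qed.

Lemma wordlen_exists (g m : G) k :
  In m (words A g k) -> exists k', k' <= k /\ wordlen_is G A g m k'.
Proof.
  induction k as [k IH] using (well_founded_induction lt_wf); intro Hm.
  destruct (classic (exists j, j < k /\ In m (words A g j))) as [[j [Hj Hmj]]|Hmin].
  - destruct (IH j Hj Hmj) as [k' [Hk' Hlen]]; exists k'; split; auto; lia.
  - exists k; repeat split; auto.
    intros j Hj Hmj; apply Hmin; eauto.
Qed.

Hypothesis hA : aut_subgroup A.

Lemma same_orbit_refl x : same_orbit A x x.
Proof. destruct hA as [_ [[e [He Hid]] _]]; exists e; auto. Qed.

Lemma same_orbit_sym x y : same_orbit A x y -> same_orbit A y x.
Proof.
  intros [a [Ha ->]]; destruct hA as [_ [_ [_ [Hinv _]]]].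
  destruct (Hinv a Ha) as [b [Hb Hba]]; exists b; auto.
Qed.

Lemma same_orbit_trans x y z : same_orbit A x y -> same_orbit A y z -> same_orbit A x z.
Proof.
  intros [a [Ha ->]] [b [Hb ->]]; destruct hA as [_ [_ [Hcomp _]]].
  destruct (Hcomp b a Hb Ha) as [c [Hc Hcba]]; exists c; auto.
Qed.

Lemma card_sphere_le_mul_xi h g r : card_sphere A g r <= length A * xi A h g r.
Proof.
  unfold card_sphere, card_in, xi; rewrite !nclasses_class_reps.
  set (S := class_reps (@eq G) _).
  rewrite <- (length_map (gmul G h) S).
  apply (@NoDup_length_le_cover _ _ (fun y => map (fun a => a y) A)).
  - apply NoDup_map_NoDup_ForallPairs; [intros x y _ _; apply gmul_linj|].
    apply class_reps_NoDup; reflexivity.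
  - intro y; apply length_map.
  - intros x Hx; apply in_map_iff in Hx as [w [<- Hw]].
    apply class_reps_incl, filter_In in Hw as [Hw _].
    assert (HT : In (gmul G h w) (T_iter A r h g)) by (apply In_T_iter; eauto).
    destruct (class_reps_cover same_orbit_refl same_orbit_sym same_orbit_trans _ HT)
      as [y [Hy [a [Ha ->]]]].
    exists y; split; auto; apply in_map_iff; eauto.
Qed.

Lemma xi_le_card_ball h g r : xi A h g r <= card_ball A g r.
Proof.
  unfold card_ball, card_in, xi; rewrite nclasses_class_reps.
  rewrite <- (length_map (gmul G (ginv G h))).
  apply NoDup_incl_le_nclasses_eq.
  - apply NoDup_map_NoDup_ForallPairs; [intros x y _ _; apply gmul_linj|].
    apply class_reps_NoDup, same_orbit_refl.
  - intros x Hx; apply in_map_iff in Hx as [y [<- Hy]].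
    apply class_reps_incl, In_T_iter in Hy as [w [Hw ->]].
    rewrite gmulKl; apply filter_In; split.
    + apply in_flat_map; exists r; split; auto; apply in_seq; lia.
    + apply decb_true, wordlen_exists, Hw.
Qed.

End CosetDynamics.

Theorem mainTheorem4 (G : Group) (A : list (G -> G)) (g : G)
  (hA : aut_subgroup A) (h : G) (r : nat) :
  card_sphere A g r <= length A * xi A h g r /\ xi A h g r <= card_ball A g r.
Proof.
  split; [apply card_sphere_le_mul_xi | apply xi_le_card_ball]; exact hA.
Qed.
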